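(* Let $u(x)=\sum_\alpha u_\alpha(x)\mathfrak{N}_\alpha$ with real-valued $u_\alpha\in L_2(U,\mu)$, only finitely many nonzero, and let $v=\sum_\alpha v_\alpha\mathfrak{N}_\alpha$ with real $v_\alpha$, only finitely many nonzero. Then $$\mathbf{E}[\delta(u)v]=\mathbf{E}\Big[\int_U u(x)\mathbb{D}v(x)d\mu\Big].$$
   Context: Setting: $(U,\mathcal{U},\mu)$ $\sigma$-finite complete measure space, $\{m_k\}$ a complete orthonormal system of $L_2(U,\mu)$; $\mathfrak{N}:L_2(U,\mu)\to L_2(\Omega,\mathbf{P})$ mean-zero linear isometry, $\xi_k=\mathfrak{N}(m_k)$. $J$: finitely supported multi-indices of nonnegative integers, $\alpha!=\prod\alpha_k!$, $\varepsilon_k$ unit multi-indices; $\{\mathfrak{N}_\alpha\}$ an orthogonal family in $L_2(\Omega)$ with $\mathbf{E}\mathfrak{N}_\alpha^2=\alpha!$, obtained by degreewise orthogonalization of monomials $\prod\xi_k^{\alpha_k}$. Skorokhod integral: $\delta(u)=\sum_\alpha\sum_k(\int_U u_\alpha m_kd\mu)\mathfrak{N}_{\alpha+\varepsilon_k}$. Malliavin derivative: $\mathbb{D}v(x)=\sum_\alpha\sum_k(\alpha_k+1)v_{\alpha+\varepsilon_k}m_k(x)\mathfrak{N}_\alpha$. *)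

From HB Require Import structures.
From mathcomp Require Import all_boot all_order all_algebra finmap.
From mathcomp Require Import all_classical all_reals all_analysis.
Set Implicit Arguments. Unset Strict Implicit. Unset Printing Implicit Defensive.
Import Order.TTheory GRing.Theory Num.Theory.
Local Open Scope classical_set_scope.
Local Open Scope ring_scope.

Definition mindex := {fsfun nat -> nat with 0%N}.

Definition meps (a : mindex) (k : nat) : mindex := [fsfun a with k |-> (a k).+1].

Definition mfact (a : mindex) : nat := (\prod_(k <- finsupp a) (a k)`!)%N.

Definition square_integrable d (T : measurableType d) (R : realType)
  (mu : {measure set T -> \bar R}) (f : T -> R) : Prop :=
  measurable_fun setT f /\ (\int[mu]_x ((f x) ^+ 2)%:E < +oo)%E.

Definition orthonormal_system d (T : measurableType d) (R : realType)
  (mu : {measure set T -> \bar R}) (m : nat -> T -> R) : Prop :=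
  (forall k, square_integrable mu (m k)) /\
  (forall j k, (\int[mu]_x (m j x * m k x)%:E = (if j == k then 1 else 0)%:E)%E).

Definition complete_system d (T : measurableType d) (R : realType)
  (mu : {measure set T -> \bar R}) (m : nat -> T -> R) : Prop :=
  forall f, square_integrable mu f ->
    (forall k, (\int[mu]_x (f x * m k x)%:E = 0)%E) -> {ae mu, forall x, f x = 0}.

Definition chaos_family d (Omega : measurableType d) (R : realType)
  (P : probability Omega R) (N : mindex -> Omega -> R) : Prop :=
  (forall a, measurable_fun setT (N a)) /\
  (forall a b, a != b -> (\int[P]_w (N a w * N b w)%:E = 0)%E) /\
  (forall a, (\int[P]_w ((N a w) ^+ 2)%:E = ((mfact a)%:R)%:E)%E).

(* Partial sums (k < n) of the Skorokhod series
   delta(u) = sum_alpha sum_k (int_U u_alpha m_k dmu) N_(alpha+eps_k),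
   where u_alpha = 0 for alpha outside the finite list S. *)
Definition skorokhod_partial dU (U : measurableType dU) dO (Omega : measurableType dO)
  (R : realType) (mu : {measure set U -> \bar R}) (m : nat -> U -> R)
  (N : mindex -> Omega -> R) (S : seq mindex) (u : mindex -> U -> R)
  (n : nat) (w : Omega) : R :=
  \sum_(a <- S) \sum_(k < n) (Rintegral mu setT (fun x => u a x * m k x)) * N (meps a k) w.

Definition is_skorokhod_integral dU (U : measurableType dU) dO (Omega : measurableType dO)
  (R : realType) (mu : {measure set U -> \bar R}) (P : probability Omega R)
  (m : nat -> U -> R) (N : mindex -> Omega -> R) (S : seq mindex)
  (u : mindex -> U -> R) (D : Omega -> R) : Prop :=
  measurable_fun setT D /\
  ((fun n => (\int[P]_w ((D w - skorokhod_partial mu m N S u n w) ^+ 2)%:E)%E)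
     @ \oo --> 0%E).

(* Malliavin derivative Dv(x) = sum_alpha sum_k (alpha_k+1) v_(alpha+eps_k) m_k(x) N_alpha
   (finitely many nonzero terms when v has finite support) *)
Definition malliavin_deriv dU (U : measurableType dU) dO (Omega : measurableType dO)
  (R : realType) (m : nat -> U -> R) (N : mindex -> Omega -> R) (v : mindex -> R)
  (x : U) (w : Omega) : R :=
  \sum_(a \in [set: mindex]) \sum_(k \in [set: nat])
     ((a k).+1%:R * v (meps a k) * m k x * N a w).

From HB Require Import structures.
From mathcomp Require Import all_boot all_order all_algebra finmap.
From mathcomp Require Import all_classical all_reals all_analysis.
From mathcomp Require Import measurable_realfun lra ring.
Import numFieldNormedType.Exports.
Import Order.TTheory GRing.Theory Num.Theory.
Local Open Scope classical_set_scope.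
Local Open Scope ring_scope.

(* Put V := sum_b v_b N_b and c_(a,k) := <u_a, m_k>.
   Orthogonality of the chaos gives E[N_e V] = v_e e!, so beyond the index K past
   which every v_(a+eps_k) vanishes, the partial sums p_n of the Skorokhod series
   satisfy E[p_n V] = L := sum_a sum_(k<K) c_(a,k) v_(a+eps_k) (a+eps_k)!.  As
   p_n -> delta(u) in L_2, E[delta(u) V] = L.  On the other side
   Dv(x) = sum_(k<K) m_k(x) W_k with W_k := sum_b (b_k+1) v_(b+eps_k) N_b, so the
   integral over U is sum_a sum_k c_(a,k) N_a W_k, whose expectation is again L
   because (a_k+1) a! = (a+eps_k)!. *)

Lemma eq0_of_bounded_multiples {R : realFieldType} {c : R} (M : R) : 0 <= c ->
  (forall t, 0 < t -> 2 * t * c <= M) -> c = 0.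
Proof.
move=> c0 ctM; apply/eqP; rewrite eq_le c0 andbT leNgt; apply/negP => c_gt0.
have M0 : 0 <= M by have := ctM 1 ltr01; rewrite mulr1; apply: le_trans; exact: mulr_ge0.
have := ctM ((M + 1) / c); rewrite divr_gt0 ?ltr_wpDl// => /(_ isT).
by rewrite -mulrA divfK ?gt_eqF//; lra.
Qed.

Section square_integrable_functions.
Context {d} {T : measurableType d} {R : realType} {mu : {measure set T -> \bar R}}.

Definition Rintegrable (f : T -> R) := mu.-integrable setT (EFin \o f).

Lemma Rintegrable_sqr {f} : square_integrable mu f -> Rintegrable (fun x => f x ^+ 2).
Proof.
case=> mf fi; apply/integrableP; split.
  by apply/measurable_EFinP; under eq_fun do rewrite expr2; exact: measurable_funM.
rewrite (eq_integral (fun x => (f x ^+ 2)%:E))// => x _.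
by rewrite /= ger0_norm// sqr_ge0.
Qed.

Lemma Rintegrable_mul {f g} : square_integrable mu f -> square_integrable mu g ->
  Rintegrable (fun x => f x * g x).
Proof.
move=> sf sg; have [mf _] := sf; have [mg _] := sg.
have fg2 := integrableD measurableT (Rintegrable_sqr sf) (Rintegrable_sqr sg).
apply: (le_integrable measurableT _ _ fg2).
  by apply/measurable_EFinP; exact: measurable_funM.
move=> x _ /=; rewrite lee_fin [X in _ <= X]ger0_norm ?addr_ge0 ?sqr_ge0//.
by rewrite ler_norml; apply/andP; split; nra.
Qed.

Lemma RintegrableZl k {f} : Rintegrable f -> Rintegrable (fun x => k * f x).
Proof. by move=> fi; apply: eq_integrable (integrableZl measurableT k fi). Qed.

Lemma Rintegrable_sum I (s : seq I) (F : I -> T -> R) :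
  (forall i, Rintegrable (F i)) -> Rintegrable (fun x => \sum_(i <- s) F i x).
Proof.
move=> Fi; elim: s => [|i s ih].
  by apply: eq_integrable (integrable0 _ _) => //= x _; rewrite big_nil.
apply: eq_integrable (integrableD measurableT (Fi i) ih) => //= x _.
by rewrite big_cons EFinD.
Qed.

Lemma Rintegral_sum I (s : seq I) (F : I -> T -> R) :
  (forall i, Rintegrable (F i)) ->
  Rintegral mu setT (fun x => \sum_(i <- s) F i x) =
  \sum_(i <- s) Rintegral mu setT (F i).
Proof.
move=> Fi; elim: s => [|i s ih].
  by rewrite big_nil; under eq_Rintegral do rewrite big_nil; rewrite Rintegral_cst// mul0r.
rewrite big_cons -ih -RintegralD//; last exact: Rintegrable_sum.
by apply: eq_Rintegral => x _; rewrite big_cons.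
exact: Fi.
Qed.

Lemma integral_Rintegral {f} :
  Rintegrable f -> (\int[mu]_x (f x)%:E)%E = (Rintegral mu setT f)%:E.
Proof. by move=> fi; rewrite /Rintegral fineK// (integrable_fin_num _ fi). Qed.

Lemma Rintegral_sum_mul I J (s : seq I) (t : seq J) (f : I -> T -> R) (g : J -> T -> R)
    (a : I -> R) (b : J -> R) :
  (forall i, square_integrable mu (f i)) -> (forall j, square_integrable mu (g j)) ->
  Rintegral mu setT (fun x => (\sum_(i <- s) f i x * a i) * (\sum_(j <- t) g j x * b j)) =
  \sum_(i <- s) \sum_(j <- t) a i * b j * Rintegral mu setT (fun x => f i x * g j x).
Proof.
move=> sf sg; have fgi i j := Rintegrable_mul (sf i) (sg j).
transitivity (Rintegral mu setT
    (fun x => \sum_(i <- s) \sum_(j <- t) a i * b j * (f i x * g j x))).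
  apply: eq_Rintegral => x _; rewrite big_distrl; apply: eq_bigr => i _ /=.
  by rewrite big_distrr; apply: eq_bigr => j _ /=; ring.
rewrite Rintegral_sum; last by move=> i; apply: Rintegrable_sum => j; exact: RintegrableZl.
apply: eq_bigr => i _; rewrite Rintegral_sum; last by move=> j; exact: RintegrableZl.
by apply: eq_bigr => j _; rewrite RintegralZl//; exact: fgi.
Qed.

(* Integrated AM-GM, used in place of Cauchy-Schwarz. *)
Lemma Rintegral_mul_le f g t : square_integrable mu f -> square_integrable mu g ->
  0 < t -> 2 * t * `|Rintegral mu setT (fun x => f x * g x)| <=
  t ^+ 2 * Rintegral mu setT (fun x => f x ^+ 2) + Rintegral mu setT (fun x => g x ^+ 2).
Proof.
move=> sf sg t0; have fg := Rintegrable_mul sf sg.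
have absfg : Rintegrable (fun x => `|f x * g x|).
  by apply: eq_integrable (integrable_abse fg).
have bnd : Rintegrable (fun x => t ^+ 2 * f x ^+ 2 + g x ^+ 2).
  apply: eq_integrable (integrableD measurableT
    (RintegrableZl (t ^+ 2) (Rintegrable_sqr sf)) (Rintegrable_sqr sg)) => // x _.
have -> : t ^+ 2 * Rintegral mu setT (fun x => f x ^+ 2) +
    Rintegral mu setT (fun x => g x ^+ 2) =
    Rintegral mu setT (fun x => t ^+ 2 * f x ^+ 2 + g x ^+ 2).
  rewrite RintegralD//; last 2 first.
  - exact: RintegrableZl _ (Rintegrable_sqr sf).
  - exact: Rintegrable_sqr.
  by rewrite RintegralZl//; exact: Rintegrable_sqr.
apply: (le_trans (y := 2 * t * Rintegral mu setT (fun x => `|f x * g x|))).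
  by rewrite ler_pM2l ?mulr_gt0//; exact: le_normr_Rintegral.
rewrite -RintegralZl//; apply: le_Rintegral => //; first exact: RintegrableZl.
move=> x _; have [fg0|fg0] := leP 0 (f x * g x).
  by have := sqr_ge0 (t * f x - g x); rewrite ger0_norm //; nra.
by have := sqr_ge0 (t * f x + g x); rewrite ltr0_norm //; nra.
Qed.

(* Continuity of [f |-> \int f g] along an L_2-convergent sequence. *)
Lemma Rintegral_mul_L2_limit {F g : T -> R} {f : nat -> T -> R} {L : R} :
  measurable_fun setT F -> (forall n, measurable_fun setT (f n)) ->
  square_integrable mu g ->
  (fun n => \int[mu]_x ((F x - f n x) ^+ 2)%:E)%E @ \oo --> 0%E ->
  (\forall n \near \oo, Rintegrable (fun x => f n x * g x) /\
     Rintegral mu setT (fun x => f n x * g x) = L) ->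
  Rintegrable (fun x => F x * g x) /\
  Rintegral mu setT (fun x => F x * g x) = L.
Proof.
move=> mF mf sg /fine_cvgP[finA cvA] fgL.
set A := fun n => fine (\int[mu]_x ((F x - f n x) ^+ 2)%:E)%E in cvA.
set M := Rintegral mu setT (fun x => g x ^+ 2).
set c := `|Rintegral mu setT (fun x => F x * g x) - L|.
have step n : Rintegrable (fun x => f n x * g x) ->
    Rintegral mu setT (fun x => f n x * g x) = L ->
    (\int[mu]_x ((F x - f n x) ^+ 2)%:E)%E \is a fin_num ->
    Rintegrable (fun x => F x * g x) /\
    forall t, 0 < t -> 2 * t * c <= t ^+ 2 * A n + M.
  move=> fgi fgE Afin.
  have sFf : square_integrable mu (fun x => F x - f n x).
    split; first exact: measurable_funB.
    by rewrite -ge0_fin_numE// integral_ge0// => x _; rewrite lee_fin sqr_ge0.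
  have Ffgi := Rintegrable_mul sFf sg.
  have FgE : (fun x => F x * g x) = (fun x => (F x - f n x) * g x + f n x * g x).
    by apply/funext => x; ring.
  have Fgi : Rintegrable (fun x => F x * g x).
    by rewrite FgE; apply: eq_integrable (integrableD measurableT Ffgi fgi).
  split=> // t t0; rewrite /c FgE RintegralD// fgE addrK.
  exact: Rintegral_mul_le.
have ev : \forall n \near \oo, Rintegrable (fun x => F x * g x) /\
    forall t, 0 < t -> 2 * t * c <= t ^+ 2 * A n + M.
  near=> n; have [fgi fgE] : Rintegrable (fun x => f n x * g x) /\
    Rintegral mu setT (fun x => f n x * g x) = L by near: n.
  by apply: step => //; near: n.
have [n0 [Fgi _]] := filter_ex ev.
split=> //; apply/eqP; rewrite -subr_eq0 -normr_eq0 -/c; apply/eqP.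
apply: (eq0_of_bounded_multiples M (normr_ge0 _)) => t t0.
apply/ler_addgt0Pr => e e0.
have t2e : 0 < e / t ^+ 2 by rewrite divr_gt0// exprn_gt0.
have [n [[_ bnd] An]] := filter_ex (filterI ev (cvgr_lt _ cvA _ t2e)).
apply: (le_trans (bnd t t0)); rewrite addrC lerD2l.
by rewrite mulrC -ler_pdivlMr ?exprn_gt0//; exact: ltW.
Unshelve. all: by end_near.
Qed.

End square_integrable_functions.
Arguments Rintegrable {d T R} mu f.

Lemma mepsE (a : mindex) k j : meps a k j = if j == k then (a k).+1 else a j.
Proof. by rewrite /meps fsfun_withE. Qed.

Lemma mfactE (a : mindex) (s : seq nat) : uniq s ->
  {subset finsupp a <= s} -> mfact a = (\prod_(j <- s) (a j)`!)%N.
Proof.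
move=> us sub; rewrite /mfact [RHS](bigID (mem (finsupp a))) /=.
rewrite [X in (_ * X)%N]big1 ?muln1; last first.
  by move=> j /negbTE jn; rewrite fsfun_dflt ?jn.
rewrite -[RHS]big_filter; apply: perm_big.
apply: uniq_perm; [exact: fset_uniq | exact: filter_uniq|].
by move=> j; rewrite mem_filter; case: (boolP (j \in finsupp a)) => // /sub ->.
Qed.

Lemma mfact_meps (a : mindex) k : mfact (meps a k) = ((a k).+1 * mfact a)%N.
Proof.
set s := undup (k :: finsupp a).
have us : uniq s by exact: undup_uniq.
have ks : k \in s by rewrite mem_undup mem_head.
rewrite (@mfactE a s us); last by move=> j js; rewrite mem_undup in_cons js orbT.
rewrite (@mfactE (meps a k) s us); last first.
  move=> j; rewrite mem_finsupp mepsE mem_undup in_cons.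
  by have [->|jk] := eqVneq j k; rewrite //= mem_finsupp.
rewrite !(big_rem k ks) /= mepsE eqxx factS mulnA; congr (_ * _)%N.
apply: eq_big_seq => j; rewrite mem_rem_uniq // inE => /andP[jk _].
by rewrite mepsE (negbTE jk).
Qed.

(* [alpha - eps_k], truncated at zero *)
Definition mdec (b : mindex) k : mindex := [fsfun b with k |-> (b k).-1].

Lemma mepsK k : cancel (meps^~ k) (mdec^~ k).
Proof.
move=> a; apply/fsfunP => j; rewrite /mdec fsfun_withE !mepsE.
by case: eqP => [->|]; rewrite ?eqxx.
Qed.

Lemma meps_preimage_finite (s : seq mindex) : exists (K : nat) (B : seq mindex),
  uniq B /\ forall a k, meps a k \in s -> (k < K)%N /\ a \in B.
Proof.
set K := (\max_(b <- s) \max_(j <- finsupp b) j.+1)%N.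
exists K, (undup [seq mdec b j | b <- s, j <- iota 0 K]); split=> [|a k aks].
  exact: undup_uniq.
have kK : (k < K)%N.
  have kin : k \in finsupp (meps a k) by rewrite mem_finsupp mepsE eqxx.
  apply: leq_trans (leq_bigmax_seq (meps a k) aks isT).
  exact: (leq_bigmax_seq (F := fun j => j.+1) k kin isT).
split=> //; rewrite mem_undup -{1}(mepsK k a).
by apply: allpairs_f => //; rewrite mem_iota.
Qed.

Definition chaos_sum {R : nzRingType} {Omega : Type} (N : mindex -> Omega -> R)
  (s : seq mindex) (w : mindex -> R) (x : Omega) : R := \sum_(b <- s) w b * N b x.

Section chaos.
Context {R : realType} {d} {Omega : measurableType d} {P : probability Omega R}
  {N : mindex -> Omega -> R}.
Hypothesis HN : chaos_family P N.

Lemma chaos_square_integrable a : square_integrable P (N a).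
Proof. by have [mN [_ Nsq]] := HN; split=> //; rewrite Nsq ltry. Qed.

Lemma Rintegral_chaos_mul a b :
  Rintegral P setT (fun x => N a x * N b x) = if a == b then (mfact a)%:R else 0.
Proof.
have [_ [Nort Nsq]] := HN; rewrite /Rintegral; case: eqVneq => [<-|ab].
  by under eq_integral do rewrite -expr2; rewrite Nsq.
by rewrite Nort.
Qed.

Lemma chaos_sum_mulE e s w :
  (fun x => N e x * chaos_sum N s w x) = (fun x => \sum_(b <- s) w b * (N e x * N b x)).
Proof.
by apply/funext => x; rewrite /chaos_sum big_distrr; apply: eq_bigr => b _ /=; ring.
Qed.

Lemma Rintegrable_chaos_sum_mul e s w :
  Rintegrable P (fun x => N e x * chaos_sum N s w x).
Proof.
rewrite chaos_sum_mulE; apply: Rintegrable_sum => b; apply: RintegrableZl.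
exact: Rintegrable_mul (chaos_square_integrable e) (chaos_square_integrable b).
Qed.

Lemma Rintegral_chaos_sum_mul e s w : uniq s -> (forall b, b \notin s -> w b = 0) ->
  Rintegral P setT (fun x => N e x * chaos_sum N s w x) = w e * (mfact e)%:R.
Proof.
move=> us w0; rewrite chaos_sum_mulE Rintegral_sum; last first.
  move=> b; apply: RintegrableZl.
  exact: Rintegrable_mul (chaos_square_integrable e) (chaos_square_integrable b).
rewrite (eq_bigr (fun b => w b * (if e == b then (mfact e)%:R else 0))); last first.
  move=> b _; rewrite RintegralZl ?Rintegral_chaos_mul//.
  exact: Rintegrable_mul (chaos_square_integrable e) (chaos_square_integrable b).
case: (boolP (e \in s)) => es; last first.
  rewrite w0// mul0r big1_seq// => b /andP[_ bs].
  by case: eqVneq => [eb|_]; [rewrite eb bs in es | rewrite mulr0].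
rewrite (big_rem e es) /= eqxx big1_seq ?addr0// => b /andP[_].
by rewrite mem_rem_uniq// inE => /andP[/negbTE be _]; rewrite eq_sym be mulr0.
Qed.

Lemma chaos_sum_square_integrable s w : square_integrable P (chaos_sum N s w).
Proof.
have mN := chaos_square_integrable.
have msum : measurable_fun setT (chaos_sum N s w).
  by apply: measurable_sum => b; apply: measurable_funM => //; case: (mN b).
have sqE : (fun x => chaos_sum N s w x ^+ 2) =
    (fun x => \sum_(b <- s) w b * (N b x * chaos_sum N s w x)).
  apply/funext => x; rewrite expr2 {1}/chaos_sum big_distrl.
  by apply: eq_bigr => b _ /=; ring.
have sqi : Rintegrable P (fun x => chaos_sum N s w x ^+ 2).
  by rewrite sqE; apply: Rintegrable_sum => b; exact/RintegrableZl/Rintegrable_chaos_sum_mul.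
by split=> //; rewrite integral_Rintegral// ltry.
Qed.

End chaos.

Lemma fsbig_setT_seq {V : nmodType} {I : choiceType} {r : seq I} {f : I -> V} :
  uniq r -> (forall i, i \notin r -> f i = 0) ->
  \sum_(i \in [set: I]) f i = \sum_(i <- r) f i.
Proof.
move=> ur f0; rewrite [RHS]fsbig_seq//.
by symmetry; apply: fsbig_widen => // i [_ /negP]; exact: f0.
Qed.

Section skorokhod_duality.
Context {R : realType} {dO} {Omega : measurableType dO} {P : probability Omega R}
  {dU} {U : measurableType dU} {mu : {measure set U -> \bar R}}
  {m : nat -> U -> R} {N : mindex -> Omega -> R} {S : seq mindex} {u : mindex -> U -> R}
  {Sv : seq mindex} {v : mindex -> R} {K : nat} {B : seq mindex}.
Hypotheses (HN : chaos_family P N) (Hm : forall k, square_integrable mu (m k))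
  (Hu : forall a, square_integrable mu (u a)) (uSv : uniq Sv) (uB : uniq B)
  (Hv : forall a, a \notin Sv -> v a = 0)
  (HKB : forall a k, meps a k \in Sv -> (k < K)%N /\ a \in B).

Let c a k : R := Rintegral mu setT (fun x => u a x * m k x).

(* The coefficients of [D v] along m_k: [D v(x) = sum_(k < K) m_k(x) W_k]. *)
Let W k (b : mindex) : R := (b k).+1%:R * v (meps b k).

Lemma v_meps_eq0 a k : ~~ ((k < K)%N && (a \in B)) -> v (meps a k) = 0.
Proof. by move=> kaKB; apply: Hv; apply: contra kaKB => /HKB[-> ->]. Qed.

Lemma malliavin_derivE x w :
  malliavin_deriv m N v x w = \sum_(k < K) m k x * chaos_sum N B (W k) w.
Proof.
rewrite /malliavin_deriv (fsbig_setT_seq uB) => [|a aB]; last first.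
  by rewrite fsbig1// => k _; rewrite v_meps_eq0 ?mulr0 ?mul0r// negb_and aB orbT.
under eq_bigr => a _.
  rewrite (fsbig_setT_seq (iota_uniq 0 (K - 0))) => [|k]; last first.
    rewrite mem_iota add0n subn0 -leqNgt => Kk.
    by rewrite v_meps_eq0 ?mulr0 ?mul0r// ltnNge Kk.
  rewrite big_mkord.
  over.
rewrite exchange_big /=; apply: eq_bigr => k _; rewrite /chaos_sum big_distrr.
by apply: eq_bigr => b _ /=; rewrite /W; ring.
Qed.

Lemma Rintegral_skorokhod_partial_mul n : (K <= n)%N ->
  Rintegrable P (fun w => skorokhod_partial mu m N S u n w * chaos_sum N Sv v w) /\
  Rintegral P setT (fun w => skorokhod_partial mu m N S u n w * chaos_sum N Sv v w) =
  \sum_(a <- S) \sum_(k < K) c a k * (v (meps a k) * (mfact (meps a k))%:R).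
Proof.
move=> Kn.
have term_integrable a k :=
  RintegrableZl (c a k) (Rintegrable_chaos_sum_mul HN (meps a k) Sv v).
have -> : (fun w => skorokhod_partial mu m N S u n w * chaos_sum N Sv v w) =
    (fun w => \sum_(a <- S) \sum_(k < n) c a k * (N (meps a k) w * chaos_sum N Sv v w)).
  apply/funext => w; rewrite /skorokhod_partial big_distrl; apply: eq_bigr => a _.
  by rewrite big_distrl; apply: eq_bigr => k _ /=; rewrite /c; ring.
split; first by apply: Rintegrable_sum => a; exact: Rintegrable_sum.
rewrite Rintegral_sum; last by move=> a; exact: Rintegrable_sum.
apply: eq_bigr => a _; rewrite Rintegral_sum//.
rewrite (big_ord_widen n (fun k => c a k * (v (meps a k) * (mfact (meps a k))%:R)) Kn).
rewrite [RHS]big_mkcond /=.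
apply: eq_bigr => k _; rewrite RintegralZl//; last exact: Rintegrable_chaos_sum_mul.
rewrite Rintegral_chaos_sum_mul//; case: ltnP => // Kk.
by rewrite v_meps_eq0 ?mul0r ?mulr0// negb_and -leqNgt Kk.
Qed.

Lemma Rintegral_mul_malliavin_deriv w :
  Rintegral mu setT (fun x => (\sum_(a <- S) u a x * N a w) * malliavin_deriv m N v x w) =
  \sum_(a <- S) \sum_(k < K) c a k * (N a w * chaos_sum N B (W k) w).
Proof.
under eq_Rintegral => x _ do rewrite malliavin_derivE.
rewrite Rintegral_sum_mul//; apply: eq_bigr => a _; apply: eq_bigr => k _.
by rewrite /c; ring.
Qed.

Lemma Rintegral_chaos_pairing :
  Rintegral P setT
    (fun w => \sum_(a <- S) \sum_(k < K) c a k * (N a w * chaos_sum N B (W k) w)) =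
  \sum_(a <- S) \sum_(k < K) c a k * (v (meps a k) * (mfact (meps a k))%:R).
Proof.
have term_integrable a k :=
  RintegrableZl (c a k) (Rintegrable_chaos_sum_mul HN a B (W k)).
rewrite Rintegral_sum; last by move=> a; exact: Rintegrable_sum.
apply: eq_bigr => a _; rewrite Rintegral_sum//; apply: eq_bigr => k _.
rewrite RintegralZl ?Rintegral_chaos_sum_mul//; last first.
- exact: Rintegrable_chaos_sum_mul.
- by move=> b bB; rewrite /W v_meps_eq0 ?mulr0// negb_and bB orbT.
by rewrite /W mfact_meps natrM; ring.
Qed.

End skorokhod_duality.

Theorem proposition8 (R : realType)
  (dO : measure_display) (Omega : measurableType dO) (P : probability Omega R)
  (dU : measure_display) (U : measurableType dU) (mu : {measure set U -> \bar R})
  (m : nat -> U -> R) (N : mindex -> Omega -> R)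
  (S : seq mindex) (u : mindex -> U -> R)
  (Sv : seq mindex) (v : mindex -> R) (D : Omega -> R) :
  sigma_finite setT mu -> measure_is_complete mu ->
  orthonormal_system mu m -> complete_system mu m ->
  chaos_family P N ->
  uniq S -> uniq Sv ->
  (forall a, square_integrable mu (u a)) ->
  (forall a, a \notin S -> u a = (fun _ => 0)) ->
  (forall a, a \notin Sv -> v a = 0) ->
  is_skorokhod_integral mu P m N S u D ->
  (\int[P]_w (D w * (\sum_(a <- Sv) v a * N a w))%:E =
  \int[P]_w (Rintegral mu setT
      (fun x => (\sum_(a <- S) u a x * N a w) * malliavin_deriv m N v x w))%:E)%E.
Proof.
move=> _ _ [Hm _] _ HN _ uSv Hu _ Hv [mD Dcvg].
have [K [B [uB HKB]]] := meps_preimage_finite Sv.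
have mp n : measurable_fun setT (skorokhod_partial mu m N S u n).
  apply: measurable_sum => a; apply: measurable_sum => k; apply: measurable_funM => //.
  by case: (chaos_square_integrable HN (meps a k)).
have [DVi DVE] := Rintegral_mul_L2_limit mD mp (chaos_sum_square_integrable HN Sv v) Dcvg
  (filterS (Rintegral_skorokhod_partial_mul HN uSv Hv HKB) (nbhs_infty_ge K)).
rewrite (integral_Rintegral DVi) DVE.
under eq_integral do rewrite (Rintegral_mul_malliavin_deriv Hm Hu uB Hv HKB).
rewrite integral_Rintegral ?(Rintegral_chaos_pairing HN uB Hv HKB)//.
by apply: Rintegrable_sum => a; apply: Rintegrable_sum => k;
  exact/RintegrableZl/Rintegrable_chaos_sum_mul.
Qed.
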